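(* Let $f:\{-1,1\}^n\to\mathbb R_{\ge0}$ with $\mathbb E[f]\le1$ be an $(\epsilon,\delta)$-approximate conical $d$-junta, where $\epsilon<1/n^4$, $d\ge\deg(f)$, and $\delta<1/n^{8d}$. Then $\deg_+\!\left(f+\frac1n\right)\le 8d$.
   Context: $\mathbb E$ is the uniform average over $\{-1,1\}^n$. For $I\subseteq[n]$, $x_I$ is the restriction of $x$ to $I$. A $d$-conjunction is $C(x)=2^{|I|}\mathbb 1[x_I=\alpha]$ with $|I|\le d$, $\alpha\in\{-1,1\}^I$. Fourier expansion: $h=\sum_S\hat h(S)\chi_S$ with $\chi_S(x)=\prod_{i\in S}x_i$. For $0<\epsilon<1$, $h$ is $\epsilon$-decaying if $\mathbb E[h]=0$ and $|\hat h(I)|\le\epsilon^{|I|}$ for all $I$. For $\epsilon\in(0,1)$, $\delta\in[0,1)$, a function $f\ge0$ with $\mathbb E[f]=1$ is an $(\epsilon,\delta)$-approximate conical $d$-junta if $f=\sum_{i\in[N]}\lambda_iC_i(1+h_i)+\gamma$ with $C_i$ $d$-conjunctions, $h_i$ $\epsilon$-decaying, $\lambda_i\ge0$, $\sum_i\lambda_i\le1$, and $\gamma\ge0$ with $\mathbb E[\gamma]\le\delta$. A $d$-junta depends on at most $d$ coordinates; a conical $d$-junta is a nonnegative combination of nonnegative $d$-juntas; $\deg_+(f)$ is the least positive integer $d$ with $f$ a conical $d$-junta; $\deg(f)$ is the degree of the multilinear polynomial representing $f$. *)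

From HB Require Import structures.
From mathcomp Require Import all_boot all_order all_algebra.
Set Implicit Arguments. Unset Strict Implicit. Unset Printing Implicit Defensive.
Import Order.TTheory GRing.Theory Num.Theory.
Local Open Scope ring_scope.

(* The hypercube {-1,1}^n: a point x : cube n encodes the vector whose
   i-th coordinate is (-1)^(x i), i.e. x i = true <-> x_i = -1. *)
Definition cube (n : nat) := {ffun 'I_n -> bool}.

Section Defs.
Variables (R : realFieldType) (n : nat).

Definition xval (x : cube n) (i : 'I_n) : R := if x i then -1 else 1.

Definition Ex (f : cube n -> R) : R := (\sum_(x : cube n) f x) / (2 ^+ n).

Definition chi (S : {set 'I_n}) (x : cube n) : R := \prod_(i in S) xval x i.

Definition fourier (h : cube n -> R) (S : {set 'I_n}) : R :=
  Ex (fun x => h x * chi S x).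

Definition mldeg (f : cube n -> R) : nat :=
  \max_(S : {set 'I_n} | fourier f S != 0) #|S|.

Definition conjunction (I : {set 'I_n}) (alpha : cube n) (x : cube n) : R :=
  2 ^+ #|I| * (if [forall i in I, x i == alpha i] then 1 else 0).

Definition is_dconj (d : nat) (C : cube n -> R) : Prop :=
  exists (I : {set 'I_n}) (alpha : cube n),
    (#|I| <= d)%N /\ C = conjunction I alpha.

Definition decaying (eps : R) (h : cube n -> R) : Prop :=
  Ex h = 0 /\ forall I : {set 'I_n}, `|fourier h I| <= eps ^+ #|I|.

(* the decomposition part of an (eps,delta)-approximate conical d-junta:
   f = sum_i lambda_i C_i (1 + h_i) + gamma *)
Definition approx_conical_junta (eps delta : R) (d : nat) (f : cube n -> R)
  : Prop :=
  exists (N : nat) (lambda : 'I_N -> R) (C h : 'I_N -> cube n -> R)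
         (gamma : cube n -> R),
    [/\ forall i, is_dconj d (C i),
        forall i, decaying eps (h i),
        forall i, 0 <= lambda i,
        \sum_(i < N) lambda i <= 1 &
        [/\ forall x, 0 <= gamma x,
        Ex gamma <= delta &
        forall x, f x = \sum_(i < N) lambda i * C i x * (1 + h i x) + gamma x]].

Definition junta (d : nat) (g : cube n -> R) : Prop :=
  exists J : {set 'I_n}, (#|J| <= d)%N /\
    forall x y : cube n, (forall i, i \in J -> x i = y i) -> g x = g y.

Definition conical_junta (d : nat) (f : cube n -> R) : Prop :=
  exists (N : nat) (c : 'I_N -> R) (g : 'I_N -> cube n -> R),
    [/\ forall i, 0 <= c i,
        forall i, junta d (g i),
        forall i x, 0 <= g i x &
        forall x, f x = \sum_(i < N) c i * g i x].

(* deg_+(f) <= k, where deg_+(f) is the least positive integer d such that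
   f is a conical d-junta: some positive d' <= k makes f a conical d'-junta *)
Definition degp_le (f : cube n -> R) (k : nat) : Prop :=
  exists d' : nat, (0 < d' <= k)%N /\ conical_junta d' f.

End Defs.

(* Truncate each [h_i] at Fourier level [7d]. As [sum_S |ĥ_i S| <= (1 + eps)^n - 1 <= 1],
   the function [1 + trunc (7d) h_i] is a nonnegative constant plus the nonnegative juntas
   [|ĥ_i S| + ĥ_i S chi_S], so [A_i = C_i (1 + trunc (7d) h_i)] is a conical [8d]-junta.
   The residual [g = f - sum_i lambda_i A_i] has degree at most [8d]. On levels at most [6d]
   the truncation is invisible through the degree-[d] conjunction [C_i], so [ĝ S] is the
   coefficient of [gamma], at most [E gamma <= delta]; on higher levels [f] has no mass and
   [|ĝ S| <= 2^d eps^(5d)]. As there are at most [(n+1)^k] sets of size at most [k], this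
   gives [sum_S |ĝ S| <= 1/n], so [g + 1/n] is a conical [8d]-junta by the same argument,
   and so is [f + 1/n = sum_i lambda_i A_i + (g + 1/n)]. When [n <= 8d] the claim is
   trivial. *)

From HB Require Import structures.
From mathcomp Require Import all_boot all_order all_algebra.
From mathcomp Require Import ring lra zify.
Import Order.TTheory GRing.Theory Num.Theory.
Local Open Scope ring_scope.
Set Implicit Arguments. Unset Strict Implicit.

Section SymmetricDifference.
Variable T : finType.
Implicit Types S U V : {set T}.

Definition symdiff S U : {set T} := (S :\: U) :|: (U :\: S).

Lemma in_symdiff S U i : (i \in symdiff S U) = (i \in S) (+) (i \in U).
Proof. by rewrite !inE; case: (i \in S); case: (i \in U). Qed.

Lemma symdiff_eq0 S U : (symdiff S U == set0) = (S == U).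
Proof.
apply/eqP/eqP => [SU0|->]; last by rewrite /symdiff setDv setU0.
apply/setP => i; move/setP/(_ i): SU0.
by rewrite in_symdiff inE; case: (i \in S); case: (i \in U).
Qed.

Lemma card_symdiff_le S U : (#|symdiff S U| <= #|S| + #|U|)%N.
Proof.
apply: leq_trans (leq_card_setU S U); apply: subset_leq_card.
by apply/subsetP => i; rewrite in_symdiff inE; case: (i \in S); case: (i \in U).
Qed.

Lemma card_symdiff_ge S U : (#|U| <= #|symdiff S U| + #|S|)%N.
Proof.
apply: leq_trans (leq_card_setU (symdiff S U) S); apply: subset_leq_card.
by apply/subsetP => i; rewrite inE in_symdiff; case: (i \in S); case: (i \in U).
Qed.

End SymmetricDifference.

Lemma prod_1D_expand (R : comNzRingType) (I : finType) (a : I -> R) :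
  \prod_i (1 + a i) = \sum_(S : {set I}) \prod_(i in S) a i.
Proof.
under eq_bigr => i _ do rewrite addrC.
by rewrite bigA_distr /=; apply: eq_bigr => S _; rewrite [RHS]big_mkcond.
Qed.

Lemma sum_exprn_card (R : comNzRingType) (I : finType) (e : R) :
  \sum_(S : {set I}) e ^+ #|S| = (1 + e) ^+ #|I|.
Proof.
rewrite -prodr_const prod_1D_expand.
by apply: eq_bigr => S _; rewrite prodr_const.
Qed.

Section Fourier.
Variables (R : realFieldType) (n : nat).
Implicit Types (S U V W : {set 'I_n}) (x y : cube n) (f g : cube n -> R).

Lemma xval_mulxx x i : xval R x i * xval R x i = 1.
Proof. by rewrite /xval; case: (x i); rewrite ?mulrNN mulr1. Qed.

Lemma normr_xval x i : `|xval R x i| = 1.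
Proof. by rewrite /xval; case: (x i); rewrite ?normrN normr1. Qed.

Lemma chiE S x : chi R S x = \prod_i (if i \in S then xval R x i else 1).
Proof. by rewrite /chi big_mkcond. Qed.

Lemma normr_chi S x : `|chi R S x| = 1.
Proof. by rewrite /chi normr_prod; apply: big1 => i _; rewrite normr_xval. Qed.

Lemma chi_set0 x : chi R set0 x = 1.
Proof. by rewrite /chi big_set0. Qed.

Lemma chiM S U x : chi R S x * chi R U x = chi R (symdiff S U) x.
Proof.
rewrite !chiE -big_split /=; apply: eq_bigr => i _; rewrite in_symdiff.
by case: (i \in S); case: (i \in U); rewrite /= ?mulr1 ?mul1r ?xval_mulxx.
Qed.

Lemma eq_Ex f g : f =1 g -> Ex f = Ex g.
Proof. by move=> fg; rewrite /Ex (eq_bigr _ (fun x _ => fg x)). Qed.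

Lemma ExD f g : Ex (fun x => f x + g x) = Ex f + Ex g.
Proof. by rewrite /Ex big_split mulrDl. Qed.

Lemma ExB f g : Ex (fun x => f x - g x) = Ex f - Ex g.
Proof. by rewrite /Ex sumrB mulrBl. Qed.

Lemma ExZ c f : Ex (fun x => c * f x) = c * Ex f.
Proof. by rewrite /Ex -mulr_sumr mulrA. Qed.

Lemma Ex_sum (I : Type) (r : seq I) (P : pred I) (F : I -> cube n -> R) :
  Ex (fun x => \sum_(i <- r | P i) F i x) = \sum_(i <- r | P i) Ex (F i).
Proof. by rewrite /Ex exchange_big mulr_suml. Qed.

Lemma two_exprn_gt0 : (0 : R) < 2 ^+ n.
Proof. by rewrite exprn_gt0 ?ltr0n. Qed.

Lemma ler_Ex f g : (forall x, f x <= g x) -> Ex f <= Ex g.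
Proof.
move=> fg; rewrite /Ex; apply: ler_wpM2r; first by rewrite invr_ge0 ltW ?two_exprn_gt0.
by apply: ler_sum => x _.
Qed.

Lemma normr_Ex_le f : `|Ex f| <= Ex (fun x => `|f x|).
Proof.
have inv_ge0 : (0 : R) <= (2 ^+ n)^-1 by rewrite invr_ge0 ltW ?two_exprn_gt0.
by rewrite /Ex normrM (ger0_norm inv_ge0); apply: ler_wpM2r => //; apply: ler_norm_sum.
Qed.

Lemma sum_chi S : \sum_x chi R S x = if S == set0 then 2 ^+ n else 0.
Proof.
pose F i (b : bool) : R := if i \in S then (if b then -1 else 1) else 1.
have -> : \sum_x chi R S x = \prod_i \sum_(b : bool) F i b.
  rewrite bigA_distr_bigA /=; apply: eq_bigr => x _; rewrite chiE.
  by apply: eq_bigr => i _; rewrite /F /xval.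
under eq_bigr => i _ do rewrite big_bool /F.
case: eqP => [->|/eqP/set0Pn [j Sj]]; last by rewrite (bigD1 j) //= Sj addNr mul0r.
by rewrite -[in RHS](card_ord n) -prodr_const; apply: eq_bigr => i _; rewrite inE.
Qed.

Lemma Ex_chi S : Ex (chi R S) = (S == set0)%:R.
Proof.
rewrite /Ex sum_chi; case: eqP => _; last by rewrite mul0r.
by rewrite mulfV // gt_eqF ?two_exprn_gt0.
Qed.

Lemma eq_fourier f g S : f =1 g -> fourier f S = fourier g S.
Proof. by move=> fg; apply: eq_Ex => x; rewrite fg. Qed.

Lemma fourierD f g S :
  fourier (fun x => f x + g x) S = fourier f S + fourier g S.
Proof. by rewrite /fourier -ExD; apply: eq_Ex => x; rewrite mulrDl. Qed.

Lemma fourierB f g S :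
  fourier (fun x => f x - g x) S = fourier f S - fourier g S.
Proof. by rewrite /fourier -ExB; apply: eq_Ex => x; rewrite mulrBl. Qed.

Lemma fourierZ c f S : fourier (fun x => c * f x) S = c * fourier f S.
Proof. by rewrite /fourier -ExZ; apply: eq_Ex => x; rewrite mulrA. Qed.

Lemma fourier_sum (I : Type) (r : seq I) (P : pred I) (F : I -> cube n -> R) S :
  fourier (fun x => \sum_(i <- r | P i) F i x) S =
  \sum_(i <- r | P i) fourier (F i) S.
Proof. by rewrite /fourier -Ex_sum; apply: eq_Ex => x; rewrite mulr_suml. Qed.

Lemma fourier_chi U S : fourier (chi R U) S = (U == S)%:R.
Proof.
rewrite /fourier (eq_Ex (g := chi R (symdiff U S))) ?Ex_chi ?symdiff_eq0 //.
by move=> x; rewrite chiM.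
Qed.

Lemma fourier_cst1 S : fourier (fun _ : cube n => 1 : R) S = (S == set0)%:R.
Proof.
rewrite (eq_fourier _ (g := chi R set0)) ?fourier_chi 1?eq_sym //.
by move=> x; rewrite chi_set0.
Qed.

Lemma fourierM_chi f V S :
  fourier (fun x => f x * chi R V x) S = fourier f (symdiff V S).
Proof. by apply: eq_Ex => x; rewrite -mulrA chiM. Qed.

Lemma normr_fourier_le f S : `|fourier f S| <= Ex (fun x => `|f x|).
Proof.
apply: le_trans (normr_Ex_le _) _; apply: ler_Ex => x.
by rewrite normrM normr_chi mulr1.
Qed.

Lemma fourier_sum_chi (P : pred {set 'I_n}) (c : {set 'I_n} -> R) W :
  fourier (fun x => \sum_(U | P U) c U * chi R U x) W = if P W then c W else 0.
Proof.
rewrite fourier_sum; under eq_bigr => U _ do rewrite fourierZ fourier_chi.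
rewrite big_mkcond (bigD1 W) //= eqxx mulr1 big1 ?addr0 // => U /negbTE ->.
by rewrite mulr0; case: (P U).
Qed.

Lemma sum_chiM y x :
  \sum_S chi R S y * chi R S x = if y == x then 2 ^+ n else 0.
Proof.
have -> : \sum_S chi R S y * chi R S x = \prod_i (1 + xval R y i * xval R x i).
  by rewrite prod_1D_expand; apply: eq_bigr => S _; rewrite /chi -big_split.
case: eqP => [->|/eqP neq_yx].
  rewrite -[in RHS](card_ord n) -prodr_const.
  by apply: eq_bigr => i _; rewrite xval_mulxx.
have [i /= yxi] : exists i, y i != x i.
  apply/existsP; apply: contraR neq_yx => /existsPn yx.
  by apply/eqP/ffunP => i; apply/eqP/negbNE.
rewrite (bigD1 i) //= /xval; move: yxi; case: (y i); case: (x i) => //= _.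
  by rewrite mulN1r addrN mul0r.
by rewrite mulrN1 addrN mul0r.
Qed.

Lemma fourier_inversion f x : f x = \sum_S fourier f S * chi R S x.
Proof.
have -> : \sum_S fourier f S * chi R S x =
    (\sum_y f y * \sum_S chi R S y * chi R S x) / 2 ^+ n.
  transitivity (\sum_S \sum_y f y * (chi R S y * chi R S x) / 2 ^+ n).
    apply: eq_bigr => S _; rewrite /fourier /Ex !mulr_suml.
    by apply: eq_bigr => y _; ring.
  rewrite exchange_big /= mulr_suml; apply: eq_bigr => y _.
  by rewrite mulr_sumr mulr_suml.
under eq_bigr => y _ do rewrite sum_chiM.
rewrite (bigD1 x) //= eqxx big1 ?addr0 => [|y /negbTE ->]; last by rewrite mulr0.
by rewrite mulfK // gt_eqF ?two_exprn_gt0.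
Qed.

End Fourier.

Section LowDegree.
Variables (R : realFieldType) (n : nat).
Implicit Types (k : nat) (S W : {set 'I_n}) (f g : cube n -> R).

Definition low_degree k g := forall S : {set 'I_n}, (k < #|S|)%N -> fourier g S = 0.

Definition fourier_l1 k g : R := \sum_(S : {set 'I_n} | (#|S| <= k)%N) `|fourier g S|.

Definition trunc k g x : R :=
  \sum_(S : {set 'I_n} | (#|S| <= k)%N) fourier g S * chi R S x.

Lemma mldeg_low_degree k f : (mldeg f <= k)%N -> low_degree k f.
Proof.
move=> fk S kS; apply/eqP; apply: contraTT kS => fS; rewrite -leqNgt.
exact: leq_trans (leq_bigmax_cond (F := fun S : {set 'I_n} => #|S|) _ fS) fk.
Qed.

Lemma trunc_id k g : low_degree k g -> trunc k g =1 g.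
Proof.
move=> g_low x; rewrite [RHS](fourier_inversion g x) [LHS]big_mkcond.
by apply: eq_bigr => S _; case: leqP => // kS; rewrite g_low ?mul0r.
Qed.

Lemma fourier_trunc k g W :
  fourier (trunc k g) W = if (#|W| <= k)%N then fourier g W else 0.
Proof. exact: fourier_sum_chi. Qed.

Lemma low_degree_trunc k g : low_degree k (trunc k g).
Proof. by move=> S kS; rewrite fourier_trunc leqNgt kS. Qed.

Lemma low_degree_1Dtrunc k g : low_degree k (fun x => 1 + trunc k g x).
Proof.
move=> S kS; rewrite fourierD fourier_cst1 low_degree_trunc // addr0.
by have /negbTE -> : S != set0 by rewrite -card_gt0; lia.
Qed.

Lemma fourier_l1_trunc k g : fourier_l1 k (trunc k g) = fourier_l1 k g.
Proof. by apply: eq_bigr => S kS; rewrite fourier_trunc kS. Qed.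

End LowDegree.

Section ConicalJuntas.
Variables (R : realFieldType) (n : nat).
Implicit Types (k : nat) (S U V I J : {set 'I_n}) (x y : cube n) (f g : cube n -> R).

Definition junta_on J g := forall x y, (forall i, i \in J -> x i = y i) -> g x = g y.

Lemma junta_on_chi S : junta_on S (chi R S).
Proof. by move=> x y xy; apply: eq_bigr => i Si; rewrite /xval xy. Qed.

Lemma junta_on_setT g : junta_on setT g.
Proof. by move=> x y xy; congr g; apply/ffunP => i; apply: xy; rewrite inE. Qed.

Lemma conical_junta_ext k f g : f =1 g -> conical_junta k f -> conical_junta k g.
Proof.
by move=> fg [N [c [h [c_ge0 hJ h_ge0 fE]]]]; exists N, c, h; split=> // x; rewrite -fg.
Qed.

Lemma conical_junta_widen k k' f :
  (k <= k')%N -> conical_junta k f -> conical_junta k' f.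
Proof.
move=> kk' [N [c [h [c_ge0 hJ h_ge0 fE]]]]; exists N, c, h; split=> // i.
by have [J [Jk hJi]] := hJ i; exists J; split=> //; apply: leq_trans kk'.
Qed.

Lemma conical_junta_atom k J g :
  (#|J| <= k)%N -> junta_on J g -> (forall x, 0 <= g x) -> conical_junta k g.
Proof.
move=> Jk gJ g_ge0; exists 1%N, (fun _ => 1), (fun _ => g).
by split=> // [i|x]; [exists J | rewrite big_ord1 mul1r].
Qed.

Lemma conical_junta0 k : conical_junta k (fun _ : cube n => 0 : R).
Proof.
by exists 0%N, (fun _ => 0), (fun _ _ => 0); split=> [[]|[]|[]|x]; rewrite ?big_ord0.
Qed.

Lemma conical_juntaD k f g :
  conical_junta k f -> conical_junta k g -> conical_junta k (fun x => f x + g x).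
Proof.
move=> [N1 [c1 [g1 [c1_ge0 g1J g1_ge0 fE]]]] [N2 [c2 [g2 [c2_ge0 g2J g2_ge0 gE]]]].
exists (N1 + N2)%N, (fun i => match split i with inl j => c1 j | inr j => c2 j end),
  (fun i => match split i with inl j => g1 j | inr j => g2 j end).
split=> [i|i|i|x]; try by case: (split i).
rewrite fE gE big_split_ord /=; congr (_ + _); apply: eq_bigr => j _.
  by rewrite (unsplitK (inl _ j)).
by rewrite (unsplitK (inr _ j)).
Qed.

Lemma conical_juntaZ k a f :
  0 <= a -> conical_junta k f -> conical_junta k (fun x => a * f x).
Proof.
move=> a_ge0 [N [c [h [c_ge0 hJ h_ge0 fE]]]]; exists N, (fun i => a * c i), h.
split=> // [i|x]; first by rewrite mulr_ge0.
by rewrite fE mulr_sumr; apply: eq_bigr => i _; rewrite mulrA.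
Qed.

Lemma conical_junta_sum k (I : Type) (r : seq I) (P : pred I) (F : I -> cube n -> R) :
  (forall i, P i -> conical_junta k (F i)) ->
  conical_junta k (fun x => \sum_(i <- r | P i) F i x).
Proof.
move=> FJ; elim: r => [|i r IHr].
  by apply: conical_junta_ext (conical_junta0 k) => x; rewrite big_nil.
have [Pi|nPi] := boolP (P i).
  by apply: conical_junta_ext (conical_juntaD (FJ i Pi) IHr) => x; rewrite big_cons Pi.
by apply: conical_junta_ext IHr => x; rewrite big_cons (negbTE nPi).
Qed.

Lemma conical_juntaM_junta k J g f :
  junta_on J g -> (forall x, 0 <= g x) -> conical_junta k f ->
  conical_junta (#|J| + k) (fun x => g x * f x).
Proof.
move=> gJ g_ge0 [N [c [h [c_ge0 hJ h_ge0 fE]]]].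
exists N, c, (fun i x => g x * h i x); split=> // [i|i x|x].
- have [K [Kk hK]] := hJ i; exists (J :|: K); split.
    by apply: leq_trans (leq_card_setU J K) _; rewrite leq_add2l.
  move=> x y xy; congr (_ * _).
    by apply: gJ => j Jj; apply: xy; rewrite inE Jj.
  by apply: hK => j Kj; apply: xy; rewrite inE Kj orbT.
- by rewrite mulr_ge0.
by rewrite fE mulr_sumr; apply: eq_bigr => i _; rewrite mulrCA.
Qed.

(* By Fourier inversion, [g + c] is the sum of the nonnegative [S]-juntas
   [|ĝ S| + ĝ S chi_S] and of the nonnegative constant [c - fourier_l1 k g]. *)
Lemma conical_junta_addr_fourier_l1 k g c :
  low_degree k g -> fourier_l1 k g <= c -> conical_junta k (fun x => g x + c).
Proof.
move=> g_low l1_le.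
pose atom S x := `|fourier g S| + fourier g S * chi R S x.
have atomJ : conical_junta k (fun x => \sum_(S : {set 'I_n} | (#|S| <= k)%N) atom S x).
  apply: conical_junta_sum => S Sk; apply: (conical_junta_atom Sk).
    by move=> x y xy; rewrite /atom (junta_on_chi xy).
  move=> x; have : - `|fourier g S| <= fourier g S * chi R S x.
    by apply: lerNnormlW; rewrite normrM normr_chi mulr1.
  rewrite /atom; lra.
have restJ : conical_junta k (fun _ : cube n => c - fourier_l1 k g).
  by apply: (@conical_junta_atom _ set0); rewrite ?cards0 // => x; rewrite subr_ge0.
apply: conical_junta_ext (conical_juntaD atomJ restJ) => x.
by rewrite big_split /= -/(trunc k g x) trunc_id // /fourier_l1; ring.
Qed.

End ConicalJuntas.

Section Conjunctions.
Variables (R : realFieldType) (n : nat).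
Implicit Types (k : nat) (S V W I : {set 'I_n}) (al x : cube n) (g phi : cube n -> R).

Definition conj_coef I al V : R :=
  \prod_(j in V) (if j \in I then xval R al j else 0).

Lemma conjunctionE I al x :
  conjunction R I al x = \sum_(V : {set 'I_n}) conj_coef I al V * chi R V x.
Proof.
have -> : conjunction R I al x =
    \prod_i (1 + (if i \in I then xval R al i * xval R x i else 0)).
  rewrite /conjunction.
  case: (boolP [forall i in I, x i == al i]) => [/forall_inP xal|].
    rewrite mulr1 -prodr_const big_mkcond; apply: eq_bigr => i _.
    case: ifP => [Ii|_]; last by rewrite addr0.
    by rewrite /xval (eqP (xal i Ii)) -/(xval R al i) xval_mulxx.
  move=> /forall_inPn [i Ii neq_xal]; rewrite mulr0 (bigD1 i) //= Ii /xval.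
  move: neq_xal; case: (x i); case: (al i) => //= _.
    by rewrite mulrN1 addrN mul0r.
  by rewrite mulN1r addrN mul0r.
rewrite prod_1D_expand; apply: eq_bigr => V _.
rewrite /conj_coef /chi -big_split /=; apply: eq_bigr => i _.
by case: (i \in I); rewrite ?mul0r.
Qed.

Lemma conjunction_ge0 I al x : 0 <= conjunction R I al x.
Proof. by rewrite mulr_ge0 ?exprn_ge0 //; case: ifP. Qed.

Lemma junta_on_conjunction I al : junta_on I (conjunction R I al).
Proof.
move=> x y xy; rewrite /conjunction.
by rewrite (eq_forallb_in (fun i Ii => congr1 (eq_op ^~ _) (xy i Ii))).
Qed.

Lemma conj_coef_eq0 I al V : ~~ (V \subset I) -> conj_coef I al V = 0.
Proof.
by move=> /subsetPn [j Vj nIj]; rewrite /conj_coef (bigD1 j) //= (negbTE nIj) mul0r.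
Qed.

Lemma sum_normr_conj_coef I al : \sum_(V : {set 'I_n}) `|conj_coef I al V| = 2 ^+ #|I|.
Proof.
transitivity (\sum_(V : {set 'I_n}) \prod_(j in V) (if j \in I then 1 else 0 : R)).
  apply: eq_bigr => V _; rewrite /conj_coef normr_prod; apply: eq_bigr => j _.
  by case: (j \in I); rewrite ?normr_xval ?normr0.
rewrite -prod_1D_expand -prodr_const [RHS]big_mkcond; apply: eq_bigr => i _.
by case: (i \in I); rewrite ?addr0.
Qed.

Lemma fourier_conjunctionM I al phi S :
  fourier (fun x => conjunction R I al x * phi x) S =
  \sum_(V : {set 'I_n}) conj_coef I al V * fourier phi (symdiff V S).
Proof.
pose psi x := \sum_(V : {set 'I_n}) conj_coef I al V * (phi x * chi R V x).
rewrite (eq_fourier _ (g := psi)).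
  by rewrite fourier_sum; apply: eq_bigr => V _; rewrite fourierZ fourierM_chi.
by move=> x; rewrite conjunctionE mulr_suml; apply: eq_bigr => V _; rewrite mulrAC mulrA.
Qed.

Lemma normr_fourier_conjunctionM_le I al phi S b :
  (forall V, V \subset I -> `|fourier phi (symdiff V S)| <= b) ->
  `|fourier (fun x => conjunction R I al x * phi x) S| <= 2 ^+ #|I| * b.
Proof.
move=> phi_le; rewrite fourier_conjunctionM -(sum_normr_conj_coef I al) mulr_suml.
apply: le_trans (ler_norm_sum _ _ _) _; apply: ler_sum => V _; rewrite normrM.
have [VI|nVI] := boolP (V \subset I); last by rewrite conj_coef_eq0 // normr0 !mul0r.
by rewrite ler_wpM2l ?phi_le.
Qed.

Lemma fourier_conjunctionM_eq0 I al phi S :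
  (forall V, V \subset I -> fourier phi (symdiff V S) = 0) ->
  fourier (fun x => conjunction R I al x * phi x) S = 0.
Proof.
move=> phi0; apply/normr0_eq0/eqP; rewrite eq_le normr_ge0 andbT.
rewrite -(mulr0 (2 ^+ #|I|)); apply: normr_fourier_conjunctionM_le => V VI.
by rewrite phi0 ?normr0.
Qed.

Lemma low_degree_conjunctionM k I al phi :
  low_degree k phi -> low_degree (#|I| + k) (fun x => conjunction R I al x * phi x).
Proof.
move=> phi_low S kS; apply: fourier_conjunctionM_eq0 => V VI; apply: phi_low.
by have := card_symdiff_ge V S; have := subset_leq_card VI; lia.
Qed.

Lemma fourier_conjunctionM_subr_trunc k I al g S : (#|I| + #|S| <= k)%N ->
  fourier (fun x => conjunction R I al x * (g x - trunc k g x)) S = 0.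
Proof.
move=> Sk; apply: fourier_conjunctionM_eq0 => V VI.
have VSk : (#|symdiff V S| <= k)%N.
  by have := card_symdiff_le V S; have := subset_leq_card VI; lia.
by rewrite fourierB fourier_trunc VSk subrr.
Qed.

End Conjunctions.

Section DecayingTruncation.
Variables (R : realFieldType) (n : nat) (eps : R) (h : cube n -> R).
Hypotheses (eps_ge0 : 0 <= eps) (eps_le1 : eps <= 1) (h_dec : decaying eps h).
Implicit Types (k : nat) (S I : {set 'I_n}) (al : cube n).

Lemma fourier_l1_decaying_le k : fourier_l1 k h <= (1 + eps) ^+ n - 1.
Proof.
have h0 : fourier h set0 = 0.
  by rewrite -h_dec.1; apply: eq_Ex => x; rewrite chi_set0 mulr1.
apply: le_trans (_ : \sum_(S : {set 'I_n}) `|fourier h S| <= _).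
  by rewrite [leLHS]big_mkcond /=; apply: ler_sum => S _; case: ifP.
rewrite -[in leRHS](card_ord n) -sum_exprn_card (bigD1 set0) //= h0 normr0 add0r.
rewrite [X in _ <= X - _](bigD1 set0) //= cards0 expr0 addrC addrK.
by apply: ler_sum => S _; apply: h_dec.2.
Qed.

Lemma conical_junta_conjunctionM_1Dtrunc k I al : (1 + eps) ^+ n <= 2 ->
  conical_junta (#|I| + k) (fun x => conjunction R I al x * (1 + trunc k h x)).
Proof.
move=> small; apply: (conical_juntaM_junta (g := conjunction R I al)).
- exact: junta_on_conjunction.
- exact: conjunction_ge0.
apply: (conical_junta_ext (f := fun x => trunc k h x + 1)) => [x|]; first exact: addrC.
apply: conical_junta_addr_fourier_l1; first exact: low_degree_trunc.
by rewrite fourier_l1_trunc (le_trans (fourier_l1_decaying_le k)) // lerBlDl.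
Qed.

Lemma normr_fourier_conjunctionM_1Dtrunc k m I al S :
  (0 < m)%N -> (#|I| + m <= #|S|)%N ->
  `|fourier (fun x => conjunction R I al x * (1 + trunc k h x)) S|
    <= 2 ^+ #|I| * eps ^+ m.
Proof.
move=> m_gt0 mS; apply: normr_fourier_conjunctionM_le => V VI.
have mW : (m <= #|symdiff V S|)%N.
  by have := card_symdiff_ge V S; have := subset_leq_card VI; lia.
rewrite fourierD fourier_cst1 fourier_trunc.
have -> : (symdiff V S == set0) = false by apply/negbTE; rewrite -card_gt0; lia.
rewrite add0r; case: ifP => _; last by rewrite normr0 exprn_ge0.
by apply: le_trans (h_dec.2 _) _; apply: ler_wiXn2l => //; rewrite eps_ge0.
Qed.

End DecayingTruncation.

Lemma card_small_sets (T : finType) k :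
  (#|[set S : {set T} | (#|S| <= k)%N]| <= #|T|.+1 ^ k)%N.
Proof.
elim: k => [|k IHk].
  apply: leq_trans (_ : #|[set set0 : {set T}]| <= 1)%N; last by rewrite cards1.
  by apply: subset_leq_card; apply/subsetP => S; rewrite !inE leqn0 cards_eq0.
pose add (p : option T * {set T}) := if p.1 is Some i then i |: p.2 else p.2.
set small := [set S : {set T} | (#|S| <= k)%N].
apply: leq_trans (_ : #|add @: setX [set: option T] small| <= _)%N.
  apply: subset_leq_card; apply/subsetP => S; rewrite inE => Sk1; apply/imsetP.
  have [Sk|kS] := leqP #|S| k; first by exists (None, S); rewrite // !inE Sk.
  have /set0Pn [i Si] : S != set0 by rewrite -card_gt0; lia.
  exists (Some i, S :\ i); last by rewrite /add /= setD1K.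
  by rewrite !inE /=; move: Sk1; rewrite (cardsD1 i S) Si add1n ltnS.
apply: leq_trans (leq_imset_card _ _) _.
by rewrite cardsX cardsT card_option expnS leq_mul2l IHk orbT.
Qed.

Section Estimates.
Variable R : realFieldType.

Lemma exprn_1Dx_mul_le1 (x : R) m : 0 <= x -> (1 + x) ^+ m * (1 - m%:R * x) <= 1.
Proof.
move=> x_ge0; elim: m => [|m IHm]; first by rewrite expr0 mul0r subr0 mul1r.
have p_ge0 : 0 <= (1 + x) ^+ m by rewrite exprn_ge0 // addr_ge0.
have m_ge0 : (0 : R) <= m%:R by rewrite ler0n.
rewrite exprS -addn1 natrD; set p := (1 + x) ^+ m in p_ge0 IHm *.
have : 0 <= p * ((m%:R + 1) * x * x) by rewrite !mulr_ge0 // addr_ge0.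
nra.
Qed.

Lemma exprn_1Dx_le2 n (eps : R) :
  (2 <= n)%N -> 0 <= eps -> eps < 1 / n%:R ^+ 4 -> (1 + eps) ^+ n <= 2.
Proof.
move=> n2 eps_ge0 eps_lt; set X : R := n%:R.
have X2 : 2 <= X by rewrite (ler_nat R 2 n).
have X3 : 8 <= X ^+ 3.
  apply: le_trans (_ : 2 ^+ 3 <= _); first by rewrite !exprS expr0; lra.
  by apply: lerXn2r; rewrite ?qualifE /= ?(le_trans _ X2) //; lra.
have neps_small : X * eps <= 1 / 2.
  have : eps * X ^+ 4 < 1 by rewrite -ltr_pdivlMr ?exprn_gt0 // (lt_le_trans _ X2).
  rewrite exprS; have : 0 <= X * eps by rewrite mulr_ge0 // (le_trans _ X2).
  nra.
have := exprn_1Dx_mul_le1 n eps_ge0.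
have : 0 <= (1 + eps) ^+ n by rewrite exprn_ge0 // addr_ge0.
nra.
Qed.

Lemma small_bases_le_half (u : R) : 0 < u -> u <= 9^-1 ->
  (1 + u) ^+ 6 * u ^+ 2 <= u / 2 /\ 2 * (1 + u) ^+ 8 * u ^+ 12 <= u / 2.
Proof.
move=> u_gt0 u_le.
have r_pow_le m : (1 + u) ^+ m <= (10 / 9) ^+ m.
  by apply: lerXn2r; rewrite ?qualifE /=; lra.
split.
  have r6 : (1 + u) ^+ 6 <= 2.
    by apply: le_trans (r_pow_le 6) _; rewrite !exprS expr0; lra.
  have : 0 <= (2 - (1 + u) ^+ 6) * u ^+ 2 by rewrite mulr_ge0 ?exprn_ge0 //; lra.
  rewrite expr2; nra.
have r8 : (1 + u) ^+ 8 <= 3.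
  by apply: le_trans (r_pow_le 8) _; rewrite !exprS expr0; lra.
have u12 : u ^+ 12 <= u ^+ 3 by rewrite ler_wiXn2l //; lra.
have : 0 <= (3 - (1 + u) ^+ 8) * u ^+ 12 by rewrite mulr_ge0 ?exprn_ge0 //; lra.
have : 0 <= u ^+ 12 by rewrite exprn_ge0 ?ltW.
rewrite !exprS expr0 in u12 *; nra.
Qed.

Lemma mass_bound_le_invn n d (eps delta : R) :
  (0 < d)%N -> (8 * d < n)%N -> 0 <= eps -> 0 <= delta ->
  eps < 1 / n%:R ^+ 4 -> delta < 1 / n%:R ^+ (8 * d) ->
  n.+1%:R ^+ (6 * d) * delta + n.+1%:R ^+ (8 * d) * (2 ^+ d * eps ^+ (5 * d))
    <= 1 / n%:R.
Proof.
move=> d_gt0 dn eps_ge0 delta_ge0 eps_lt delta_lt.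
have X9 : 9 <= n%:R :> R by rewrite ler_nat; lia.
rewrite !mul1r in eps_lt delta_lt *.
set X : R := n%:R in X9 eps_lt delta_lt *.
have X_gt0 : 0 < X by lra.
have X1_ge0 : 0 <= X + 1 by lra.
have n1E : n.+1%:R = X + 1 by rewrite -addn1 natrD.
have u_le : X^-1 <= 9^-1 by rewrite lef_pV2 ?posrE //; lra.
have u_gt0 : 0 < X^-1 by rewrite invr_gt0.
have [b1_le b2_le] := small_bases_le_half u_gt0 u_le.
(* Each term is the [d]-th power of a base at most [1 / (2 n)]. *)
set b1 := (1 + X^-1) ^+ 6 * X^-1 ^+ 2 in b1_le.
set b2 := 2 * (1 + X^-1) ^+ 8 * X^-1 ^+ 12 in b2_le.
have t1 : n.+1%:R ^+ (6 * d) * delta <= b1 ^+ d.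
  have -> : b1 = (X + 1) ^+ 6 / X ^+ 8 by rewrite /b1; field; lra.
  rewrite n1E (exprMn d) exprVn -!exprM; apply: ler_wpM2l; first exact: exprn_ge0.
  exact: ltW.
have t2 : n.+1%:R ^+ (8 * d) * (2 ^+ d * eps ^+ (5 * d)) <= b2 ^+ d.
  have -> : b2 = 2 * (X + 1) ^+ 8 / X ^+ 20 by rewrite /b2; field; lra.
  rewrite n1E (exprMn d (2 * _)) (exprMn d 2) exprVn -!exprM.
  rewrite (mulrC (2 ^+ d) ((X + 1) ^+ _)) -mulrA.
  apply: ler_wpM2l; first exact: exprn_ge0.
  apply: ler_wpM2l; first by rewrite exprn_ge0.
  rewrite (_ : (20 * d = 4 * (5 * d))%N); last by lia.
  rewrite (exprM X) -exprVn; apply: lerXn2r; rewrite ?qualifE /= ?invr_ge0 ?exprn_ge0 //.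
  exact: ltW.
have powd_le (b : R) : 0 <= b <= 1 -> b ^+ d <= b.
  by case/andP=> b_ge0 b_le1; rewrite -[leRHS]expr1 ler_wiXn2l.
have b1_ge0 : 0 <= b1 by rewrite mulr_ge0 ?exprn_ge0 //; lra.
have b2_ge0 : 0 <= b2 by rewrite !mulr_ge0 ?exprn_ge0 //; lra.
have := powd_le b1; have := powd_le b2; lra.
Qed.

End Estimates.

Section Residual.
Variables (R : realFieldType) (n d N : nat) (eps delta : R) (f : cube n -> R).
Variables (lam : 'I_N -> R) (C h : 'I_N -> cube n -> R) (gam : cube n -> R).
Hypotheses (d_gt0 : (0 < d)%N) (eps_ge0 : 0 <= eps) (eps_le1 : eps <= 1).
Hypothesis f_deg : (mldeg f <= d)%N.
Hypotheses (C_dconj : forall i, is_dconj d (C i)) (h_dec : forall i, decaying eps (h i)).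
Hypotheses (lam_ge0 : forall i, 0 <= lam i) (lam_sum : \sum_(i < N) lam i <= 1).
Hypotheses (gam_ge0 : forall x, 0 <= gam x) (gam_Ex : Ex gam <= delta).
Hypothesis fE : forall x, f x = \sum_(i < N) lam i * C i x * (1 + h i x) + gam x.
Implicit Types (S : {set 'I_n}) (x : cube n).

Let A i x := C i x * (1 + trunc (7 * d) (h i) x).
Let residual x := f x - \sum_(i < N) lam i * A i x.

Lemma conical_junta_truncated_part : (1 + eps) ^+ n <= 2 ->
  conical_junta (8 * d) (fun x => \sum_(i < N) lam i * A i x).
Proof.
move=> small; apply: conical_junta_sum => i _; apply: conical_juntaZ => //.
rewrite /A; have [I [al [Id ->]]] := C_dconj i.
have := conical_junta_conjunctionM_1Dtrunc (h_dec i) (7 * d) I al small.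
apply: conical_junta_widen.
by rewrite [(8 * d)%N]mulSn leq_add2r.
Qed.

Lemma fourier_residual S :
  fourier residual S = fourier f S - \sum_(i < N) lam i * fourier (A i) S.
Proof.
rewrite fourierB fourier_sum; congr (_ - _).
by apply: eq_bigr => i _; rewrite fourierZ.
Qed.

Lemma low_degree_residual : low_degree (8 * d) residual.
Proof.
move=> S dS; rewrite fourier_residual (mldeg_low_degree f_deg) ?sub0r; last first.
  by apply: leq_ltn_trans dS; rewrite leq_pmull.
rewrite big1 ?oppr0 // => i _; rewrite /A; have [I [al [Id ->]]] := C_dconj i.
rewrite (low_degree_conjunctionM al (@low_degree_1Dtrunc _ _ (7 * d) (h i))) ?mulr0 //.
by apply: leq_ltn_trans dS; rewrite [(8 * d)%N]mulSn leq_add2r.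
Qed.

Lemma normr_fourier_residual_low S : (#|S| <= 6 * d)%N -> `|fourier residual S| <= delta.
Proof.
move=> Sd.
have -> : fourier residual S =
    fourier (fun x =>
      \sum_(i < N) lam i * (C i x * (h i x - trunc (7 * d) (h i) x)) + gam x) S.
  apply: eq_fourier => x; rewrite /residual fE addrAC -sumrB; congr (_ + _).
  by apply: eq_bigr => i _; rewrite /A; ring.
rewrite fourierD fourier_sum big1 ?add0r => [|i _].
  apply: le_trans (normr_fourier_le _ _) (le_trans _ gam_Ex).
  by apply: ler_Ex => x; rewrite ger0_norm.
have [I [al [Id ->]]] := C_dconj i.
by rewrite fourierZ fourier_conjunctionM_subr_trunc ?mulr0 // [(7 * d)%N]mulSn leq_add.
Qed.

Lemma normr_fourier_residual_high S : (6 * d < #|S|)%N ->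
  `|fourier residual S| <= 2 ^+ d * eps ^+ (5 * d).
Proof.
move=> dS; rewrite fourier_residual (mldeg_low_degree f_deg) ?sub0r ?normrN; last first.
  by apply: leq_trans dS; rewrite ltnS leq_pmull.
apply: le_trans (ler_norm_sum _ _ _) _.
apply: le_trans (_ : \sum_(i < N) lam i * (2 ^+ d * eps ^+ (5 * d)) <= _); last first.
  by rewrite -mulr_suml ler_piMl ?mulr_ge0 ?exprn_ge0.
apply: ler_sum => i _; rewrite normrM ger0_norm // ler_wpM2l // /A.
have [I [al [Id ->]]] := C_dconj i.
apply: le_trans (normr_fourier_conjunctionM_1Dtrunc eps_ge0 eps_le1 (h_dec i) (7 * d)
  (m := 5 * d) al _ _) _.
- by rewrite muln_gt0.
- by apply: leq_trans (ltnW dS); rewrite [(6 * d)%N]mulSn leq_add2r.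
by rewrite ler_wpM2r ?exprn_ge0 // ler_weXn2l ?ler1n.
Qed.

Lemma fourier_l1_residual_le : fourier_l1 (8 * d) residual <=
  n.+1%:R ^+ (6 * d) * delta + n.+1%:R ^+ (8 * d) * (2 ^+ d * eps ^+ (5 * d)).
Proof.
set K := 2 ^+ d * eps ^+ (5 * d).
have sum_cst_le k (c : R) : 0 <= c ->
    \sum_(S : {set 'I_n} | (#|S| <= k)%N) c <= n.+1%:R ^+ k * c.
  move=> c_ge0; rewrite sumr_const -[c *+ _]mulr_natl; apply: ler_wpM2r => //.
  by rewrite -natrX ler_nat; have := card_small_sets 'I_n k; rewrite card_ord cardsE.
apply: le_trans (_ : \sum_(S : {set 'I_n} | (#|S| <= 8 * d)%N)
    ((if (#|S| <= 6 * d)%N then delta else 0) + K) <= _).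
  apply: ler_sum => S _; case: leqP => Sd.
    by rewrite -[leLHS]addr0 lerD ?normr_fourier_residual_low ?mulr_ge0 ?exprn_ge0.
  by rewrite add0r normr_fourier_residual_high.
rewrite big_split /= -big_mkcondr /=; apply: lerD; last first.
  by apply: sum_cst_le; rewrite mulr_ge0 ?exprn_ge0.
rewrite (eq_bigl (fun S : {set 'I_n} => (#|S| <= 6 * d)%N)) ?sum_cst_le //.
  by apply: le_trans gam_Ex; rewrite /Ex mulr_ge0 ?invr_ge0 ?sumr_ge0 ?exprn_ge0.
move=> S; apply/idP/idP => [/andP[]|Sd] //.
by rewrite Sd andbT (leq_trans Sd) // leq_mul2r orbT.
Qed.

End Residual.

Theorem lemma2p4 (R : realFieldType) (n d : nat) (eps delta : R)
    (f : cube n -> R) :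
  0 < eps < 1 -> 0 <= delta < 1 ->
  (0 < d)%N ->
  (forall x, 0 <= f x) ->
  Ex f <= 1 ->
  approx_conical_junta eps delta d f ->
  eps < 1 / (n%:R ^+ 4) ->
  (mldeg f <= d)%N ->
  delta < 1 / (n%:R ^+ (8 * d)) ->
  degp_le (fun x => f x + 1 / n%:R) (8 * d).
Proof.
move=> /andP[eps_gt0 eps_lt1] /andP[delta_ge0 _] d_gt0 f_ge0 _ f_approx eps_lt f_deg.
move=> delta_lt.
have eps_ge0 := ltW eps_gt0.
exists (8 * d)%N; split; first by rewrite leqnn andbT muln_gt0.
have [n_le|n_gt] := leqP n (8 * d).
  apply: (conical_junta_atom (J := setT)); first by rewrite cardsT card_ord.
    exact: junta_on_setT.
  by move=> x; rewrite addr_ge0 ?mulr_ge0 ?invr_ge0 ?ler0n.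
have [N [lam [C [h [gam [C_dconj h_dec lam_ge0 lam_sum [gam_ge0 gam_Ex fE]]]]]]] :=
  f_approx.
have small : (1 + eps) ^+ n <= 2 by apply: exprn_1Dx_le2 => //; lia.
have budget := mass_bound_le_invn d_gt0 n_gt eps_ge0 delta_ge0 eps_lt delta_lt.
have l1_le := fourier_l1_residual_le d_gt0 eps_ge0 (ltW eps_lt1) f_deg C_dconj h_dec
  lam_ge0 lam_sum gam_ge0 gam_Ex fE.
have residual_cone := conical_junta_addr_fourier_l1
  (low_degree_residual lam h f_deg C_dconj) (le_trans l1_le budget).
have truncated_cone := conical_junta_truncated_part C_dconj h_dec lam_ge0 small.
apply: conical_junta_ext (conical_juntaD truncated_cone residual_cone) => x /=.
by rewrite addrCA addrA subrK.
Qed.
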